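(* Let $A$ be a finite skew brace such that $\Lambda(A)$ has exactly one vertex. Then $(A/\ker\lambda,\circ)$ and $(\operatorname{Fix}(A),+)$ are isomorphic abelian groups. Moreover $x+f-x=-f$ for all $f\in\operatorname{Fix}(A)$ and all $x\in A\setminus\operatorname{Fix}(A)$.
   Context: A skew brace is a triple $(A,+,\circ)$ where $(A,+)$ and $(A,\circ)$ are groups with $a\circ(b+c)=a\circ b-a+a\circ c$. $\lambda\colon(A,\circ)\to\operatorname{Aut}(A,+)$, $\lambda_a(b)=-a+a\circ b$, is a group homomorphism; $\ker\lambda$ is its kernel. $\operatorname{Fix}(A)=\{a\in A:\lambda_x(a)=a\ \forall x\in A\}$. $\Lambda(A)$ is the graph whose vertices are the $\lambda$-orbits of size $>1$, two distinct vertices $L_1,L_2$ adjacent iff $\gcd(|L_1|,|L_2|)\ne1$. *)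

From mathcomp Require Import all_boot.
Set Implicit Arguments. Unset Strict Implicit. Unset Printing Implicit Defensive.

Record skew_brace (T : finType) := SkewBrace {
  add : T -> T -> T;
  opp : T -> T;
  zero : T;
  circ : T -> T -> T;
  cinv : T -> T;
  one : T;
  addA : forall a b c, add a (add b c) = add (add a b) c;
  add0r : forall a, add zero a = a;
  addNr : forall a, add (opp a) a = zero;
  circA : forall a b c, circ a (circ b c) = circ (circ a b) c;
  circ1r : forall a, circ one a = a;
  circVr : forall a, circ (cinv a) a = one;
  brace_compat : forall a b c,
    circ a (add b c) = add (add (circ a b) (opp a)) (circ a c)
}.

Section SkewBraceDefs.
Variables (T : finType) (B : skew_brace T).

Definition lam (a b : T) : T := add B (opp B a) (circ B a b).

Definition kerlam : {set T} := [set a | [forall b, lam a b == b]].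

Definition Fixb : {set T} := [set a | [forall x, lam x a == a]].

Definition lam_orbit (a : T) : {set T} := [set lam x a | x in T].

Definition Lambda_vertices : {set {set T}} :=
  [set lam_orbit a | a in [set a : T | 1 < #|lam_orbit a|]].

End SkewBraceDefs.

From HB Require Import structures.
From Pilot Require Import Defs.
From mathcomp Require Import all_boot fingroup action.
Set Implicit Arguments. Unset Strict Implicit. Unset Printing Implicit Defensive.

(* The set Fix(A) is an additive subgroup fixed pointwise by every lambda_a,
   so its complement is a union of left cosets x + Fix(A).  When Lambda(A) has
   a single vertex, that complement is one lambda-orbit; its size divides
   |A| = |Fix(A)| + |orbit|, hence divides |Fix(A)|, so the orbit is exactly
   one coset x + Fix(A).  Then a |-> -x + lambda_a(x) is a homomorphism
   (A, o) -> (Fix(A), +), onto, and with kernel ker lambda because lambda_a is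
   determined by lambda_a(x).  Comparing lambda_a(-x) = -lambda_a(x) with
   -x in x + Fix(A) gives x + f - x = -f; as inversion is then an automorphism
   of Fix(A), this group is abelian. *)

Definition add_group (T : finType) (B : skew_brace T) : Type := T.
HB.instance Definition _ (T : finType) (B : skew_brace T) :=
  Finite.on (add_group B).
HB.instance Definition _ (T : finType) (B : skew_brace T) :=
  Finite_isGroup.Build (add_group B) (@addA _ B) (@add0r _ B) (@addNr _ B).

Definition circ_group (T : finType) (B : skew_brace T) : Type := T.
HB.instance Definition _ (T : finType) (B : skew_brace T) :=
  Finite.on (circ_group B).
HB.instance Definition _ (T : finType) (B : skew_brace T) :=
  Finite_isGroup.Build (circ_group B) (@circA _ B) (@circ1r _ B) (@circVr _ B).

Section SkewBraceTheory.
Context {T : finType} {B : skew_brace T}.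
Local Notation "x \+ y" := (add B x y) (at level 50, left associativity).
Local Notation "\- x" := (opp B x) (at level 35).
Local Notation "x \* y" := (circ B x y) (at level 40, left associativity).
Local Notation z := (zero B).
Local Notation o1 := (Defs.one B).
Local Notation F := (Fixb B).

Lemma addr0 a : a \+ z = a. Proof. exact: (@mulg1 (add_group B)). Qed.
Lemma addrN a : a \+ \- a = z. Proof. exact: (@mulgV (add_group B)). Qed.
Lemma addKr a b : \- a \+ (a \+ b) = b. Proof. exact: (@mulKg (add_group B)). Qed.
Lemma addNKr a b : a \+ (\- a \+ b) = b. Proof. exact: (@mulKVg (add_group B)). Qed.
Lemma addrK a b : a \+ b \+ \- b = a. Proof. exact: (@mulgK (add_group B)). Qed.
Lemma addrNK a b : a \+ \- b \+ b = a. Proof. exact: (@mulgKV (add_group B)). Qed.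
Lemma addI a : injective (add B a). Proof. exact: (@mulgI (add_group B)). Qed.
Lemma addIr a : injective (add B ^~ a). Proof. exact: (@mulIg (add_group B)). Qed.
Lemma oppK : involutive (opp B). Proof. exact: (@invgK (add_group B)). Qed.
Lemma oppD a b : \- (a \+ b) = \- b \+ \- a. Proof. exact: (@invgM (add_group B)). Qed.
Lemma opp0 : \- z = z. Proof. exact: (@invg1 (add_group B)). Qed.
Lemma opp_eq a b : a \+ b = z -> \- a = b. Proof. exact: (@mulg1_eq (add_group B)). Qed.

Lemma circV a : a \* cinv B a = o1. Proof. exact: (@mulgV (circ_group B)). Qed.
Lemma cinvK : involutive (cinv B). Proof. exact: (@invgK (circ_group B)). Qed.
Lemma cinvM a b : cinv B (a \* b) = cinv B b \* cinv B a.
Proof. exact: (@invgM (circ_group B)). Qed.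
Lemma cinv1 : cinv B o1 = o1. Proof. exact: (@invg1 (circ_group B)). Qed.

Lemma lamD a b c : lam B a (b \+ c) = lam B a b \+ lam B a c.
Proof. by rewrite /lam brace_compat !addA. Qed.

Lemma lam0 a : lam B a z = z.
Proof. by apply: (@addI (a \* z)); rewrite /lam addr0 addA -brace_compat add0r. Qed.

Lemma lamN a b : lam B a (\- b) = \- lam B a b.
Proof. by apply/esym/opp_eq; rewrite -lamD addrN lam0. Qed.

Lemma circ0 a : a \* z = a.
Proof. by rewrite -[LHS](addNKr a) -/(lam B a z) lam0 addr0. Qed.

Lemma one0 : o1 = z.
Proof. by rewrite -(circ0 o1) circ1r. Qed.

Lemma lam1 b : lam B o1 b = b.
Proof. by rewrite /lam circ1r one0 opp0 add0r. Qed.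

Lemma lamM a b c : lam B (a \* b) c = lam B a (lam B b c).
Proof. by rewrite {3}/lam lamD lamN /lam oppD oppK circA -!addA addNKr. Qed.

Lemma lamK a : cancel (lam B a) (lam B (cinv B a)).
Proof. by move=> c; rewrite -lamM circVr lam1. Qed.

Lemma FixbP f : reflect (forall x, lam B x f = f) (f \in F).
Proof. by rewrite inE; apply: (iffP forallP) => h x; apply/eqP; apply: h. Qed.

Lemma kerlamP a : reflect (forall b, lam B a b = b) (a \in kerlam B).
Proof. by rewrite inE; apply: (iffP forallP) => h b; apply/eqP; apply: h. Qed.

Lemma Fixb_lam x a : (lam B x a \in F) = (a \in F).
Proof. by apply/idP/idP => [lxaF|/FixbP ->//]; rewrite -(lamK x a) (FixbP _ lxaF). Qed.

Lemma Fixb0 : z \in F.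
Proof. by apply/FixbP => x; rewrite lam0. Qed.

Lemma FixbD f g : f \in F -> g \in F -> f \+ g \in F.
Proof. by move=> /FixbP fF /FixbP gF; apply/FixbP => x; rewrite lamD fF gF. Qed.

Lemma FixbN f : f \in F -> \- f \in F.
Proof. by move=> /FixbP fF; apply/FixbP => x; rewrite lamN fF. Qed.

Lemma addr_notFix x f : x \notin F -> f \in F -> x \+ f \notin F.
Proof. by move=> xF fF; apply: contra xF => xfF; rewrite -(addrK x f) FixbD ?FixbN. Qed.

Lemma oppr_notFix x : x \notin F -> \- x \notin F.
Proof. by apply: contra => /FixbN; rewrite oppK. Qed.

Lemma lam_orbitP a b : reflect (exists x, b = lam B x a) (b \in lam_orbit B a).
Proof. by apply: (iffP imsetP) => [[x _ ->]|[x ->]]; exists x. Qed.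

Lemma mem_lam_orbit a : a \in lam_orbit B a.
Proof. by apply/lam_orbitP; exists o1; rewrite lam1. Qed.

Lemma lam_orbit_gt1 a : (1 < #|lam_orbit B a|) = (a \notin F).
Proof.
apply/idP/idP => [|aF].
  apply: contraL => /FixbP aF; rewrite -leqNgt; apply/card_le1_eqP.
  by move=> _ _ /lam_orbitP[x ->] /lam_orbitP[y ->]; rewrite !aF.
have [x lam_x_a] : exists x, lam B x a != a.
  by apply/existsP; apply: contraR aF => /existsPn h; apply/FixbP => y; apply/eqP/negPn.
apply/card_gt1P; exists a, (lam B x a); split=> //; first exact: mem_lam_orbit.
  by apply/lam_orbitP; exists x.
by rewrite eq_sym.
Qed.

(* MathComp actions are right actions, so the left action lambda is composed
   with inversion. *)
Definition lam_act (b : T) (a : circ_group B) : T := lam B (cinv B a) b.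

Lemma lam_act1 : lam_act^~ 1%g =1 id.
Proof. by move=> b; rewrite /lam_act cinv1 lam1. Qed.

Lemma lam_actM b : act_morph lam_act b.
Proof. by move=> x y; rewrite /lam_act cinvM lamM. Qed.

Canonical lam_action := TotalAction lam_act1 lam_actM.

Lemma lam_orbitE a : lam_orbit B a = orbit lam_action [set: circ_group B] a.
Proof.
apply/setP => b; apply/lam_orbitP/imsetP => [[x ->]|[x _ ->]].
  by exists (cinv B x); rewrite ?inE //= /lam_act cinvK.
by exists (cinv B x).
Qed.

Lemma dvdn_lam_orbit a : #|lam_orbit B a| %| #|T|.
Proof.
rewrite lam_orbitE (@bij_eq_card T (circ_group B) id); last by exists id.
by rewrite -cardsT dvdn_orbit.
Qed.

End SkewBraceTheory.

Section OneVertex.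
Variables (T : finType) (B : skew_brace T).
Hypothesis one_vertex : #|Lambda_vertices B| = 1.
Local Notation "x \+ y" := (add B x y) (at level 50, left associativity).
Local Notation "\- x" := (opp B x) (at level 35).
Local Notation "x \* y" := (circ B x y) (at level 40, left associativity).
Local Notation z := (zero B).
Local Notation F := (Fixb B).

Lemma exists_notFix : exists x, x \notin F.
Proof.
have /card_gt0P[_ /imsetP[a aF _]] : 0 < #|Lambda_vertices B| by rewrite one_vertex.
by exists a; rewrite inE lam_orbit_gt1 in aF.
Qed.

Lemma lam_orbit_notFix a : a \notin F -> lam_orbit B a = ~: F.
Proof.
have /cards1P[V defV] : #|Lambda_vertices B| == 1 by rewrite one_vertex.
have vertexE b : b \notin F -> lam_orbit B b = V.
  by move=> bF; apply/set1P; rewrite -defV imset_f // inE lam_orbit_gt1.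
move=> aF; apply/setP => b; rewrite inE; apply/idP/idP.
  by case/lam_orbitP => x ->; rewrite Fixb_lam.
by move=> bF; rewrite (vertexE _ aF) -(vertexE _ bF) mem_lam_orbit.
Qed.

Variables (x : T) (xF : x \notin F).

Lemma notFix_coset : ~: F = [set x \+ f | f in F].
Proof.
set C := [set x \+ f | f in F].
have sCnotF : C \subset ~: F.
  by apply/subsetP => _ /imsetP[f fF ->]; rewrite inE addr_notFix.
have cardC : #|C| = #|F| by rewrite card_imset //; apply: addI.
have dvd_notF : #|~: F| %| #|F|.
  rewrite -(dvdn_addr _ (dvdnn #|~: F|)) addnC cardsC.
  by rewrite -(lam_orbit_notFix xF) dvdn_lam_orbit.
have F_gt0 : 0 < #|F| by apply/card_gt0P; exists z; apply: Fixb0.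
by apply/esym/eqP; rewrite eqEcard sCnotF cardC dvdn_leq.
Qed.

Lemma notFix_diff y : y \notin F -> \- x \+ y \in F.
Proof. by rewrite -in_setC notFix_coset => /imsetP[f fF ->]; rewrite addKr. Qed.

Definition displacement a := \- x \+ lam B a x.

Lemma lam_notFixE a : lam B a x = x \+ displacement a.
Proof. by rewrite addNKr. Qed.

Lemma displacement_Fixb a : displacement a \in F.
Proof.
by apply: notFix_diff; rewrite -in_setC -(lam_orbit_notFix xF); apply/lam_orbitP; exists a.
Qed.

Lemma displacementM a b : displacement (a \* b) = displacement a \+ displacement b.
Proof.
by rewrite /displacement lamM lam_notFixE lamD (FixbP _ (displacement_Fixb b)) addKr addA.
Qed.

Lemma displacement_surj f : f \in F -> exists a, displacement a = f.
Proof.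
move=> fF; have /lam_orbitP[a lam_a_x] : x \+ f \in lam_orbit B x.
  by rewrite lam_orbit_notFix // inE addr_notFix.
by exists a; rewrite /displacement -lam_a_x addKr.
Qed.

Lemma displacement_eq0 a : displacement a = z <-> a \in kerlam B.
Proof.
split=> [d0|/kerlamP lam_id]; last by rewrite /displacement lam_id addNr.
apply/kerlamP => b; have [bF|] := boolP (b \in F); first exact: (FixbP _ bF).
rewrite -in_setC notFix_coset => /imsetP[f fF ->].
by rewrite lamD lam_notFixE d0 addr0 (FixbP _ fF).
Qed.

Lemma displacementV a : displacement (cinv B a) = \- displacement a.
Proof.
apply/esym/opp_eq; rewrite -displacementM circV.
by rewrite /displacement lam1 addNr.
Qed.

(* Write -x = x + g with g in Fix(A) and compare the two expansions of lambda_a(-x). *)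
Lemma conj_Fixb f : f \in F -> x \+ f \+ \- x = \- f.
Proof.
move=> /displacement_surj[a <-].
have gF : \- x \+ \- x \in F := notFix_diff (oppr_notFix xF).
have : lam B a (x \+ (\- x \+ \- x)) = \- lam B a x by rewrite addNKr lamN.
rewrite lamD (FixbP _ gF) lam_notFixE => e.
by apply: (@addIr _ B (\- x)); rewrite -oppD -e !addA.
Qed.

Lemma Fixb_addC f g : f \in F -> g \in F -> f \+ g = g \+ f.
Proof.
move=> fF gF; apply: (can_inj (@oppK _ B)).
rewrite -(conj_Fixb (FixbD fF gF)) oppD -(conj_Fixb fF) -(conj_Fixb gF).
by rewrite !addA addrNK.
Qed.

Lemma commutator_kerlam a b : a \* b \* cinv B (b \* a) \in kerlam B.
Proof.
apply/displacement_eq0; rewrite displacementM displacementV !displacementM.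
by rewrite (Fixb_addC (displacement_Fixb a)) ?displacement_Fixb // addrN.
Qed.

End OneVertex.

Theorem mainTheorem13 (T : finType) (B : skew_brace T) :
  #|Lambda_vertices B| = 1 ->
  (* (A / ker lambda, o) and (Fix(A), +) are isomorphic: a surjective group
     homomorphism (A, o) -> (Fix(A), +) whose kernel is exactly ker lambda *)
  (exists phi : T -> T,
      (forall a b, phi (circ B a b) = add B (phi a) (phi b)) /\
      (forall a, phi a \in Fixb B) /\
      (forall f, f \in Fixb B -> exists a, phi a = f) /\
      (forall a, phi a = zero B <-> a \in kerlam B)) /\
  (* (Fix(A), +) is abelian *)
  (forall f g, f \in Fixb B -> g \in Fixb B -> add B f g = add B g f) /\
  (* (A / ker lambda, o) is abelian *)
  (forall a b, circ B (circ B a b) (cinv B (circ B b a)) \in kerlam B) /\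
  (* x + f - x = -f *)
  (forall f x, f \in Fixb B -> x \notin Fixb B ->
      add B (add B x f) (opp B x) = opp B f).
Proof.
move=> one_vertex; have [x xF] := exists_notFix one_vertex.
split; last split; last split.
- exists (displacement B x); split; first exact: displacementM.
  split; first exact: displacement_Fixb.
  split; first exact: displacement_surj.
  exact: displacement_eq0.
- exact: Fixb_addC xF.
- exact: commutator_kerlam xF.
- by move=> f y fF yF; apply: conj_Fixb.
Qed.
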